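(* Let $\omega\ge2$ and let $\Gamma$ be a finite simple graph on $n$ vertices that is $k$-regular and $\omega$-clique regular, whose smallest adjacency eigenvalue $\lambda_1$ has multiplicity $a_1$. Then $\lambda_1\ge\frac{-k}{\omega-1}$. If moreover $k<\omega(\omega-1)$, then $\lambda_1=\frac{-k}{\omega-1}$ and $a_1\ge n-\frac{nk}{\omega(\omega-1)}$.
   Context: A graph is $\omega$-clique regular if it has a nonempty edge set and every edge lies in exactly one clique of order $\omega$. *)

From HB Require Import structures.
From mathcomp Require Import all_boot all_order all_algebra.
From mathcomp Require Import reals.
Set Implicit Arguments. Unset Strict Implicit. Unset Printing Implicit Defensive.
Import Order.TTheory GRing.Theory Num.Theory.

Definition simple_graph (n : nat) (adj : rel 'I_n) : Prop :=
  symmetric adj /\ irreflexive adj.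

Definition k_regular (n : nat) (adj : rel 'I_n) (k : nat) : Prop :=
  forall x : 'I_n, #|[set y | adj x y]| = k.

Definition is_clique (n : nat) (adj : rel 'I_n) (S : {set 'I_n}) : bool :=
  [forall x in S, forall y in S, (x != y) ==> adj x y].

Definition clique_regular (n : nat) (adj : rel 'I_n) (omega : nat) : Prop :=
  (exists x y : 'I_n, adj x y) /\
  forall x y : 'I_n, adj x y ->
    #|[set S : {set 'I_n} | [&& x \in S, y \in S, is_clique adj S
                              & #|S| == omega]]| = 1.

Definition adjmx (R : realType) (n : nat) (adj : rel 'I_n) : 'M[R]_n :=
  \matrix_(i, j) ((adj i j)%:R)%R.

From HB Require Import structures.
From mathcomp Require Import all_boot all_order all_algebra.
From mathcomp Require Import reals.
Import Order.TTheory GRing.Theory Num.Theory.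
Set Implicit Arguments. Unset Strict Implicit. Unset Printing Implicit Defensive.

(* Let N be the vertex-clique incidence matrix of the omega-cliques.  Clique
   regularity says that two adjacent vertices share exactly one omega-clique
   and two non-adjacent distinct vertices none, and double counting shows that
   a vertex lies in k/(omega-1) of them.  Hence N N^T = A + k/(omega-1) I, so
   A + k/(omega-1) I is positive semidefinite: this is the eigenvalue bound.
   Double counting also gives nk/(omega(omega-1)) cliques in total.  When this
   is less than n, the eigenspace of A for -k/(omega-1), which is the kernel
   of N N^T, has dimension at least n - rank N >= n - #cliques > 0. *)

Local Open Scope ring_scope.

Lemma sum_nat_bool_card (T : finType) (A : {pred T}) (P : pred T) :
  (\sum_(x in A) P x = #|[set x in A | P x]|)%N.
Proof. by rewrite -sum1dep_card big_mkcondr; apply: eq_bigr => x _; case: (P x). Qed.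

Lemma exchange_sum_card (T U : finType) (A : {pred T}) (B : {pred U})
    (r : T -> U -> bool) :
  (\sum_(x in A) #|[set y in B | r x y]|
    = \sum_(y in B) #|[set x in A | r x y]|)%N.
Proof.
under eq_bigr do rewrite -sum1dep_card big_mkcondr.
under [RHS]eq_bigr do rewrite -sum1dep_card big_mkcondr.
by rewrite exchange_big.
Qed.

Section RowDot.
Variables (R : realDomainType) (n : nat).
Implicit Type v : 'rV[R]_n.

Lemma dotmx_self_ge0 v : 0 <= (v *m v^T) 0 0.
Proof. by rewrite mxE sumr_ge0 // => j _; rewrite mxE -expr2 sqr_ge0. Qed.

Lemma dotmx_self_eq0 v : ((v *m v^T) 0 0 == 0) = (v == 0).
Proof.
apply/eqP/eqP => [v0|->]; last by rewrite mul0mx mxE.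
have sq_ge0 j : 0 <= v 0 j * v^T j 0 by rewrite mxE -expr2 sqr_ge0.
rewrite mxE in v0; apply/rowP => j.
have := psumr_eq0P (fun l _ => sq_ge0 l) v0 (i := j) isT.
by rewrite mxE -expr2 => /eqP; rewrite sqrf_eq0 mxE => /eqP.
Qed.

Lemma dotmx_self_gt0 v : (0 < (v *m v^T) 0 0) = (v != 0).
Proof. by rewrite lt_def dotmx_self_ge0 andbT dotmx_self_eq0. Qed.

End RowDot.

Lemma eigenvalue_gram_ge0 (R : realFieldType) m n (N : 'M[R]_(m, n)) mu :
  eigenvalue (N *m N^T) mu -> 0 <= mu.
Proof.
move=> /eigenvalueP[v vNN vn0].
have dotN : ((v *m N) *m (v *m N)^T) 0 0 = mu * (v *m v^T) 0 0.
  by rewrite trmx_mul mulmxA -(mulmxA v) vNN -scalemxAl mxE.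
have vv_gt0 : 0 < (v *m v^T) 0 0 by rewrite dotmx_self_gt0.
by rewrite -(pmulr_lge0 _ vv_gt0) -dotN dotmx_self_ge0.
Qed.

Lemma rank_ker_gram (F : fieldType) m n (N : 'M[F]_(m, n)) :
  (m - n <= \rank (kermx (N *m N^T)))%N.
Proof.
rewrite mxrank_ker leq_sub2l //.
exact: leq_trans (mxrankM_maxl N N^T) (rank_leq_col N).
Qed.

Lemma eigenspace_add_scalar (F : fieldType) n (A : 'M[F]_n) a c :
  eigenspace (A + c%:M) (a + c) = eigenspace A a.
Proof. by rewrite /eigenspace raddfD /= opprD addrACA subrr addr0. Qed.

Definition incidence_mx (R : pzSemiRingType) n (C : {set {set 'I_n}}) :
  'M[R]_(n, #|C|) :=
  \matrix_(x, j) (x \in (enum_val j : {set 'I_n}))%:R.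

Lemma incidence_mx_gramE (R : pzSemiRingType) n (C : {set {set 'I_n}}) x y :
  (incidence_mx R C *m (incidence_mx R C)^T) x y
    = #|[set S in C | (x \in S) && (y \in S)]|%:R.
Proof.
rewrite mxE; under eq_bigr do rewrite !mxE -natrM mulnb.
rewrite -natr_sum.
rewrite -(big_enum_val (fun S : {set _} => (x \in S) && (y \in S) : nat)).
by rewrite sum_nat_bool_card.
Qed.

Definition cliques n (adj : rel 'I_n) omega : {set {set 'I_n}} :=
  [set S | is_clique adj S & #|S| == omega].

Section CliqueRegularGraph.
Variables (n : nat) (adj : rel 'I_n) (k omega : nat).
Hypotheses (omega_ge2 : (2 <= omega)%N) (adj_simple : simple_graph adj)
  (adj_regular : k_regular adj k) (adj_clique_regular : clique_regular adj omega).

Local Notation C := (cliques adj omega).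

Lemma card_cliques_at2 x y : x != y ->
  #|[set S in C | (x \in S) && (y \in S)]| = adj x y.
Proof.
move=> neq_xy; case: adj_clique_regular => _ cr.
have [Axy|nAxy] /= := boolP (adj x y).
  rewrite -(cr x y Axy); apply: eq_card => S; rewrite !inE.
  by rewrite [LHS]andbC -!andbA.
apply/eqP; rewrite cards_eq0; apply/eqP/setP => S; rewrite !inE.
apply/negP => /andP[/andP[clS _] /andP[xS yS]].
move/forall_inP/(_ x xS)/forall_inP/(_ y yS): clS.
by rewrite neq_xy (negbTE nAxy).
Qed.

Lemma card_cliques_at x : (#|[set S in C | x \in S]| * (omega - 1) = k)%N.
Proof.
rewrite -sum_nat_const.
transitivity
  (\sum_(S in [set S in C | x \in S]) #|[set y in [set~ x] | y \in S]|)%N.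
  apply: eq_bigr => S; rewrite !inE => /andP[/andP[_ /eqP <-] xS].
  by rewrite (cardsD1 x S) xS add1n subn1; apply: eq_card => y; rewrite !inE.
rewrite (exchange_sum_card _ _ (fun (S : {set _}) y => y \in S)).
transitivity (\sum_(y in [set~ x]) adj x y)%N.
  apply: eq_bigr => y; rewrite !inE eq_sym => neq_xy.
  rewrite -(card_cliques_at2 neq_xy); apply: eq_card => S.
  by rewrite !inE andbA.
rewrite sum_nat_bool_card -(adj_regular x); apply: eq_card => y; rewrite !inE.
by case: eqP => // ->; rewrite (proj2 adj_simple).
Qed.

Lemma card_cliques : (#|C| * (omega * (omega - 1)) = n * k)%N.
Proof.
have size_cliques : (\sum_(S in C) omega
                      = \sum_(S in C) #|[set x in [set: 'I_n] | x \in S]|)%N.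
  apply: eq_bigr => S; rewrite inE => /andP[_ /eqP <-].
  by apply: eq_card => x; rewrite !inE.
rewrite mulnA -sum_nat_const size_cliques.
rewrite (exchange_sum_card _ _ (fun (S : {set _}) x => x \in S)) big_distrl /=.
rewrite (eq_bigr (fun _ => k)) ?sum_nat_const ?cardsT ?card_ord // => x _.
exact: card_cliques_at.
Qed.

Lemma clique_incidence_gram (R : realType) :
  incidence_mx R C *m (incidence_mx R C)^T
    = adjmx R adj + (k%:R / (omega%:R - 1))%:M.
Proof.
have omega1_neq0 : (omega%:R - 1 : R) != 0.
  by rewrite -(natrB R (ltnW omega_ge2)) pnatr_eq0 subn_eq0 -ltnNge.
apply/matrixP => x y; rewrite incidence_mx_gramE !mxE.
have [<-|neq_xy] := eqVneq x y; last first.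
  by rewrite (card_cliques_at2 neq_xy) mulr0n addr0.
rewrite (proj2 adj_simple) add0r mulr1n -(card_cliques_at x).
rewrite natrM natrB ?(ltnW omega_ge2) // mulfK //.
by congr _%:R; apply: eq_card => S; rewrite !inE andbb.
Qed.

Lemma card_cliques_lt : (k < omega * (omega - 1))%N -> (#|C| < n)%N.
Proof.
move=> k_small; have n_gt0 : (0 < n)%N.
  by case: adj_clique_regular => -[x _] _; apply: leq_ltn_trans (ltn_ord x).
have ww1_gt0 : (0 < omega * (omega - 1))%N by rewrite muln_gt0 subn_gt0 ltnW.
by rewrite -(ltn_pmul2r ww1_gt0) card_cliques ltn_pmul2l.
Qed.

End CliqueRegularGraph.

Theorem corollary3 (R : realType) (n : nat) (adj : rel 'I_n) (k omega : nat)
  (lambda1 : R) :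
  (2 <= omega)%N ->
  simple_graph adj ->
  k_regular adj k ->
  clique_regular adj omega ->
  eigenvalue (adjmx R adj) lambda1 ->
  (forall mu : R, eigenvalue (adjmx R adj) mu -> lambda1 <= mu) ->
  - (k%:R : R) / (omega%:R - 1) <= lambda1 /\
  ((k < omega * (omega - 1))%N ->
     lambda1 = - (k%:R : R) / (omega%:R - 1) /\
     (n%:R : R) - (n * k)%:R / (omega * (omega - 1))%:R
       <= (\rank (eigenspace (adjmx R adj) lambda1))%:R).
Proof.
move=> omega_ge2 adj_simple adj_regular adj_clique_regular ev_lambda1 lambda1_min.
have gramN :=
  clique_incidence_gram omega_ge2 adj_simple adj_regular adj_clique_regular R.
have cliques_lt :=
  card_cliques_lt omega_ge2 adj_simple adj_regular adj_clique_regular.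
set r : R := k%:R / (omega%:R - 1) in gramN *; rewrite mulNr.
set N := incidence_mx R (cliques adj omega) in gramN.
set A := adjmx R adj in gramN ev_lambda1 lambda1_min *.
have eigenspaceA a : eigenspace A a = eigenspace (N *m N^T) (a + r).
  by rewrite gramN eigenspace_add_scalar.
have lambda1_ge : - r <= lambda1.
  rewrite -subr_ge0 opprK; apply: (eigenvalue_gram_ge0 (N := N)).
  by move: ev_lambda1; rewrite /eigenvalue eigenspaceA.
split=> // k_small.
have rank_ge : (n - #|cliques adj omega| <= \rank (eigenspace A (- r)))%N.
  rewrite eigenspaceA addNr /eigenspace (raddf0 (@scalar_mx R n)) subr0.
  exact: rank_ker_gram.
have ev_r : eigenvalue A (- r).
  rewrite /eigenvalue -mxrank_eq0 -lt0n; apply: leq_trans rank_ge.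
  by rewrite subn_gt0 cliques_lt.
have lambda1_eq : lambda1 = - r by apply/eqP; rewrite eq_le lambda1_ge lambda1_min.
split=> //; rewrite lambda1_eq.
rewrite -(card_cliques adj_simple adj_regular adj_clique_regular) natrM mulfK; last first.
  by rewrite pnatr_eq0 muln_eq0 negb_or -!lt0n subn_gt0 ltnW.
by rewrite -natrB ?ler_nat // ltnW ?cliques_lt.
Qed.
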